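(* Let $\Bbbk$ be a field of characteristic zero, let $n \geq 5$ be odd and $S=\Bbbk[x_1,\ldots,x_n]$. If $I\subset S$ is an artinian ideal minimally generated by $n+2$ quadratic monomials, then $S/I$ has the WLP.
   Context: A standard graded artinian algebra $A=\bigoplus_i A_i$ has the WLP if there is a linear form $\ell$ such that $\times\ell:A_k\to A_{k+1}$ has maximal rank (is injective or surjective) for every $k$; for monomial quotients $S/I$ this is equivalent to taking $\ell=x_1+\cdots+x_n$. *)

From HB Require Import structures.
From mathcomp Require Import all_boot all_order all_algebra.
From mathcomp Require Import mpoly.
Set Implicit Arguments. Unset Strict Implicit. Unset Printing Implicit Defensive.
Import GRing.Theory.
Local Open Scope ring_scope.

Section MonomialIdeal.
Variables (K : fieldType) (n : nat).

Definition in_mideal (G : seq (multinom n)) (p : {mpoly K[n]}) : Prop :=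
  exists h : 'I_(size G) -> {mpoly K[n]},
    p = \sum_(i < size G) h i * 'X_[nth mnm0 G i].

(* S/I is artinian: some power m^N of the maximal homogeneous ideal lies in I,
   i.e. every homogeneous polynomial of degree N is in I. *)
Definition artinian_mideal (G : seq (multinom n)) : Prop :=
  exists N : nat, forall p : {mpoly K[n]}, p \is N.-homog -> in_mideal G p.

(* Weak Lefschetz property of A = S/I: there is a linear form l such that
   for every k the map  x l : A_k -> A_{k+1}  is injective or surjective.
   Here A_k = S_k / I_k, so injectivity means: f in S_k, l f in I => f in I;
   surjectivity means: every g in S_{k+1} is l f + (element of I) for some f in S_k. *)
Definition has_WLP (G : seq (multinom n)) : Prop :=
  exists c : 'I_n -> K,
    let l : {mpoly K[n]} := \sum_(i < n) c i *: 'X_i in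
    forall k : nat,
      (forall f : {mpoly K[n]}, f \is k.-homog ->
          in_mideal G (l * f) -> in_mideal G f)
      \/
      (forall g : {mpoly K[n]}, g \is k.+1.-homog ->
          exists f : {mpoly K[n]}, f \is k.-homog /\ in_mideal G (g - l * f)).

End MonomialIdeal.

From HB Require Import structures.
From mathcomp Require Import all_boot all_order all_algebra.
From mathcomp Require Import zify ring.
From mathcomp Require Import mpoly.
Set Implicit Arguments. Unset Strict Implicit. Unset Printing Implicit Defensive.
Import GRing.Theory.
Local Open Scope ring_scope.

(* Since I is artinian and generated in degree 2, it contains every square
   x_i^2; as G is duplicate-free, at most two of its n + 2 generators are
   squarefree monomials x_e.  The squarefree monomials x_s with s containing no
   such e then form a basis of S/I, and multiplication by l = x_1 + ... + x_n
   acts on coefficient functions as the up operator U F(t) = sum_(w in t) F(t \ w).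
   For 2k + 2 < n, U is injective in degree k: deleting a vertex of some e
   reduces, by induction, to the Boolean lattice of a set W with 2k < |W|,
   where injectivity follows in characteristic zero from the commutation
   relation DU - UD = |W| - 2|s| with the down operator D.  For 2k + 2 > n,
   U maps level k of the whole Boolean lattice onto level k + 1 (same relation,
   descending induction on the level), which suffices because the other
   monomials vanish in S/I.  As n is odd these cases cover every k. *)

Section BooleanLattice.
Variables (K : fieldType) (n : nat).
Hypothesis char0 : [pchar K] =i pred0.
Local Notation T := {set 'I_n}.
Implicit Types (s t W e : T) (E : seq T) (F : T -> K).

Definition up_op F t : K := \sum_(w in t) F (t :\ w).
Definition down_op W F s : K := \sum_(v in W :\: s) F (v |: s).

Definition on_level k F := forall s, F s != 0 -> #|s| == k.

Definition up_injective_on (P : pred T) k := forall F,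
  (forall s, F s != 0 -> P s && (#|s| == k)) ->
  (forall t, P t -> up_op F t = 0) -> forall s, F s = 0.

Lemma pchar0_natf_neq0 c : (0 < c)%N -> (c%:R : K) != 0.
Proof. by move=> c_gt0; rewrite (proj1 (pcharf0P K) char0) -lt0n. Qed.

Lemma pchar0_mulrn_eq0 (x : K) c : (0 < c)%N -> (x *+ c == 0) = (x == 0).
Proof.
by move=> c_gt0; rewrite -mulr_natr mulf_eq0 (negbTE (pchar0_natf_neq0 c_gt0)) orbF.
Qed.

Lemma exists_sumr_neq0 (I : finType) (P : pred I) (f : I -> K) :
  \sum_(i | P i) f i != 0 -> exists2 i, P i & f i != 0.
Proof.
move=> h; apply/exists_inP; apply: contraNT h => /exists_inPn h.
by apply/eqP; apply: big1 => i /h; rewrite negbK => /eqP.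
Qed.

Lemma setU1D1 (v w : 'I_n) s : v != w -> (v |: s) :\ w = v |: (s :\ w).
Proof.
move=> vw; apply/setP=> x; rewrite !inE.
by case: (eqVneq x v) => [->|//]; rewrite vw.
Qed.

Lemma card_set_le s : (#|s| <= n)%N.
Proof. by have := max_card s; rewrite card_ord. Qed.

Lemma down_upE W F s : s \subset W ->
  down_op W (up_op F) s + F s *+ #|s| = up_op (down_op W F) s + F s *+ #|W :\: s|.
Proof.
move=> sW.
have -> : down_op W (up_op F) s = F s *+ #|W :\: s| +
    \sum_(v in W :\: s) \sum_(w in s) F ((v |: s) :\ w).
  rewrite /down_op -sumr_const -big_split /=; apply: eq_bigr => v.
  rewrite inE => /andP[vs _]; rewrite /up_op (bigD1 v) ?setU11 //= setU1K //.
  congr (_ + _); apply: eq_bigl => w; rewrite !inE.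
  by case: (eqVneq w v) => [->|] /=; rewrite ?(negbTE vs) ?andbT ?andbF.
have -> : up_op (down_op W F) s = F s *+ #|s| +
    \sum_(w in s) \sum_(v in W :\: s) F ((v |: s) :\ w).
  rewrite /up_op -sumr_const -big_split /=; apply: eq_bigr => w ws.
  rewrite /down_op (bigD1 w) /=; last by rewrite !inE eqxx (subsetP sW).
  rewrite setD1K //; congr (_ + _); apply: eq_big => [v|v].
    by rewrite !inE; case: (eqVneq v w) => [->|] /=; rewrite ?ws ?andbF ?andbT.
  by rewrite !inE => /andP[_ vw]; rewrite setU1D1.
by rewrite exchange_big /=; ring.
Qed.

Lemma down_up_on_level W k F s : on_level k F -> s \subset W ->
  down_op W (up_op F) s + F s *+ (2 * k) = up_op (down_op W F) s + F s *+ #|W|.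
Proof.
move=> hF sW; have := down_upE F sW.
have [->|/hF/eqP sk] := eqVneq (F s) 0; first by rewrite !mul0rn !addr0.
have kW : (k <= #|W|)%N by rewrite -sk subset_leq_card.
rewrite cardsD (setIidPr sW) sk => E.
by rewrite mul2n -addnn -(subnK kW) !mulrnDr !addrA E.
Qed.

Lemma eq0_of_down_eq0 W c F : (0 < c)%N ->
  (forall s, F s != 0 -> s \subset W) ->
  (forall s, s \subset W -> up_op (down_op W F) s + F s *+ c = 0) ->
  (forall s, down_op W F s = 0) -> forall s, F s = 0.
Proof.
move=> c_gt0 hF hUD DF0 s; have [sW|nsW] := boolP (s \subset W); last first.
  by apply/eqP; apply: contraNT nsW => /hF.
have := hUD s sW; rewrite /up_op big1 ?add0r => [/eqP|w _]; last exact: DF0.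
by rewrite pchar0_mulrn_eq0 // => /eqP.
Qed.

(* By induction on [k]: [down_op W F] satisfies the same identity one level
   lower, with [c + (#|W| - 2 * k)] in place of [c]. *)
Lemma up_down_shift_eq0 W k c F : (2 * k <= #|W|)%N -> (0 < c)%N ->
  (forall s, F s != 0 -> (s \subset W) && (#|s| == k)) ->
  (forall s, s \subset W -> up_op (down_op W F) s + F s *+ c = 0) ->
  forall s, F s = 0.
Proof.
elim: k c F => [|k IH] c F kW c_gt0 hF hUD.
all: apply: (eq0_of_down_eq0 c_gt0 _ hUD) => [s /hF /andP[] //|].
  move=> s; apply: big1 => v; rewrite inE => /andP[vs _].
  by apply/eqP; apply: contraT => /hF /andP[_]; rewrite cardsU1 vs.
have DF_level s : down_op W F s != 0 -> (s \subset W) && (#|s| == k).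
  move=> /exists_sumr_neq0 [v]; rewrite inE => /andP[vs vW] /hF /andP[].
  by rewrite subUset sub1set vW cardsU1 vs => /= -> .
have lvl : on_level k (down_op W F) by move=> t /DF_level /andP[].
apply: (IH (c + (#|W| - 2 * k))%N) => //; first lia.
  by rewrite addn_gt0 c_gt0.
move=> s sW; have := down_up_on_level lvl sW.
have -> : down_op W (up_op (down_op W F)) s = - (down_op W F s *+ c).
  rewrite /down_op -sumrMnl -sumrN; apply: eq_bigr => v; rewrite inE => /andP[vs vW].
  by apply/eqP; rewrite -addr_eq0 hUD // subUset sub1set vW sW.
have k2W : (2 * k <= #|W|)%N by lia.
move=> E; apply: (addIr (down_op W F s *+ (2 * k))).
by rewrite add0r -addrA -mulrnDr -addnA (subnK k2W) mulrnDr addrCA -E; ring.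
Qed.

Lemma up_injective_on_subsets W k : (2 * k < #|W|)%N ->
  up_injective_on (fun s => s \subset W) k.
Proof.
move=> kW F hF hU; have lvl : on_level k F by move=> t /hF /andP[].
apply: (@up_down_shift_eq0 W k (#|W| - 2 * k)) => [|||s sW].
- exact: ltnW.
- by rewrite subn_gt0.
- exact: hF.
have := down_up_on_level lvl sW.
have -> : down_op W (up_op F) s = 0.
  apply: big1 => v; rewrite inE => /andP[vs vW].
  by apply: hU; rewrite subUset sub1set vW sW.
move=> E; apply: (addIr (F s *+ (2 * k))).
by rewrite add0r -addrA -mulrnDr (subnK (ltnW kW)) -E add0r.
Qed.

(* Descending induction on the level [j]: solve one level higher for [up_op G]
   with a larger shift, getting [H'], and take [H = (G - D H') / c]. *)
Lemma down_up_shift_surj d j c G : (n < j + d)%N -> (n <= 2 * j)%N -> (0 < c)%N ->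
  on_level j G ->
  exists2 H, on_level j H & forall s, down_op setT (up_op H) s + H s *+ c = G s.
Proof.
elim: d j c G => [|d IH] j c G jd nj c_gt0 hG.
  exists (fun _ => 0) => [s|s]; first by rewrite eqxx.
  have -> : G s = 0.
    by apply/eqP; apply: contraT => /hG /eqP sj; have := card_set_le s; lia.
  by rewrite mul0rn addr0; apply: big1 => v _; apply: big1.
pose D := down_op [set: 'I_n].
have UG_level : on_level j.+1 (up_op G).
  move=> t /exists_sumr_neq0 [w wt] /hG /eqP hw.
  by rewrite (cardsD1 w t) wt hw.
have [||| H' H'_level eH'] :=
  IH j.+1 (c + (2 * j.+1 - n))%N (up_op G) _ _ _ UG_level; [lia | lia | lia |].
have DUH' t : D (up_op H') t + H' t *+ (c + (2 * j.+1 - n)) = up_op (D H') t + H' t *+ c.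
  have := down_up_on_level H'_level (subsetT t); rewrite cardsT card_ord -/D.
  have nj2 : (n <= 2 * j.+1)%N by lia.
  move=> E; apply: (addIr (H' t *+ n)).
  by rewrite -addrA -mulrnDr -addnA (subnK nj2) mulrnDr addrCA E; ring.
pose H s := c%:R^-1 * (G s - D H' s).
exists H => [s|s].
  rewrite /H mulf_eq0 negb_or => /andP[_].
  have [->|/hG //] := eqVneq (G s) 0; rewrite sub0r oppr_eq0.
  by move=> /exists_sumr_neq0 [v]; rewrite inE => /andP[vs _] /H'_level; rewrite cardsU1 vs.
have DUG : D (up_op G) s = D (up_op (D H')) s + D H' s *+ c.
  rewrite /D /down_op -sumrMnl -big_split /=; apply: eq_bigr => v _.
  by rewrite -eH' DUH'.
have DUH : D (up_op H) s = c%:R^-1 * (D (up_op G) s - D (up_op (D H')) s).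
  rewrite /D /down_op -sumrB mulr_sumr; apply: eq_bigr => v _.
  by rewrite /up_op -sumrB mulr_sumr.
rewrite -/D DUH DUG -(mulr_natr (D H' s)) -(mulr_natr (H s)) /H.
by field; apply: pchar0_natf_neq0.
Qed.

Lemma up_surjective k G : (n < 2 * k.+1)%N -> on_level k.+1 G ->
  exists2 F, on_level k F & forall t, up_op F t = G t.
Proof.
move=> nk hG.
have [||| H H_level eH] := @down_up_shift_surj n.+1 k.+1 (2 * k.+1 - n) G _ _ _ hG; [lia | lia | lia |].
exists (down_op setT H) => [s|t].
  by move=> /exists_sumr_neq0 [v]; rewrite inE => /andP[vs _] /H_level; rewrite cardsU1 vs.
have := down_up_on_level H_level (subsetT t); rewrite cardsT card_ord -eH.
have nk2 : (n <= 2 * k.+1)%N by lia.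
move=> E; apply: (addIr (H t *+ n)).
by rewrite -E -addrA -mulrnDr (subnK nk2).
Qed.

Lemma eq_up_injective_on (P Q : pred T) k : P =1 Q ->
  up_injective_on P k -> up_injective_on Q k.
Proof.
move=> PQ hP F hF hU; apply: hP => [s /hF|t Pt]; first by rewrite PQ.
by apply: hU; rewrite -PQ.
Qed.

Lemma up_injective_on_del_link (P : pred T) (a : 'I_n) k :
  up_injective_on (fun s => P s && (a \notin s)) k ->
  ((0 < k)%N -> up_injective_on (fun s => P (a |: s) && (a \notin s)) k.-1) ->
  up_injective_on P k.
Proof.
move=> inj_del inj_link F hF hU.
pose F0 (s : T) := if a \in s then 0 else F s.
have F0z : forall s, F0 s = 0.
  apply: inj_del => [s|t /andP[Pt at_]].
    by rewrite /F0; case: ifP => [_|_ /hF /andP[-> ->] //]; rewrite eqxx.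
  rewrite -(hU t Pt); apply: eq_bigr => w _.
  by rewrite /F0 in_setD1 (negbTE at_) andbF.
have F_del s : a \notin s -> F s = 0.
  by move=> as_; have := F0z s; rewrite /F0 (negbTE as_).
move=> s; have [as_|] := boolP (a \in s); last exact: F_del.
case: k inj_del inj_link hF hU => [|k] _ inj_link hF hU.
  apply/eqP; apply: contraT => /hF /andP[_ /eqP /cards0_eq] s0.
  by move: as_; rewrite s0 inE.
pose F1 (r : T) := if a \in r then 0 else F (a |: r).
have F1z : forall r, F1 r = 0.
  apply: (inj_link isT) => [r|r /andP[Pr ar]].
    rewrite /F1; case: ifP => [_|ar]; first by rewrite eqxx.
    by move=> /hF /andP[-> /=]; rewrite cardsU1 ar.
  have := hU _ Pr; rewrite /up_op (bigD1 a) ?setU11 //= setU1K // F_del // add0r.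
  move=> E; rewrite -[RHS]E; apply: eq_big => [w|w wr].
    by rewrite !inE; case: (eqVneq w a) => [->|] /=; rewrite ?(negbTE ar) ?andbT ?andbF.
  have aw : a != w by apply: contraNneq ar => ->.
  by rewrite /F1 in_setD1 (negbTE ar) andbF setU1D1.
by have := F1z (s :\ a); rewrite /F1 setD11 setD1K.
Qed.

Definition independent W E : pred T :=
  fun s => (s \subset W) && all (fun e : T => ~~ (e \subset s)) E.

Lemma independent_cons_notsub W e E : ~~ (e \subset W) ->
  independent W (e :: E) =1 independent W E.
Proof.
move=> eW s; rewrite /independent /=; have [sW|] //= := boolP (s \subset W).
suff -> : ~~ (e \subset s) by [].
by apply: contra eW => es; apply: subset_trans es sW.
Qed.

Lemma independent_del W e E a s : a \in e ->
  independent W (e :: E) s && (a \notin s) = independent (W :\ a) E s.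
Proof.
move=> ae; rewrite /independent /= subsetD1; have [as_|as_] /= := boolP (a \in s).
  by rewrite !andbF.
have -> : ~~ (e \subset s) by apply/negP => /subsetP /(_ a ae); rewrite (negbTE as_).
by rewrite !andbT.
Qed.

Lemma independent_link W E a s : a \in W ->
  independent W E (a |: s) && (a \notin s) =
  independent (W :\ a) (map (fun e => e :\ a) E) s.
Proof.
move=> aW; rewrite /independent subsetD1 all_map subUset sub1set aW /=.
under [in LHS]eq_all => e do rewrite -subDset.
by case: (s \subset W); case: (a \in s); rewrite /= ?andbT ?andbF.
Qed.

Lemma up_injective_on_independent W E k :
  (2 * k + size E < #|W|)%N -> up_injective_on (independent W E) k.
Proof.
have [N] := ubnP (#|W| + size E); elim: N W E k => // N IH W [|e E] k hN hk.
  apply: (@eq_up_injective_on (fun s => s \subset W)).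
    by move=> s; rewrite /independent andbT.
  by apply: up_injective_on_subsets; rewrite addn0 in hk.
have [eW|eW] := boolP (e \subset W); last first.
  apply: eq_up_injective_on (fun s => esym (independent_cons_notsub E eW s)) _.
  by apply: IH => /=; rewrite /= in hN hk; lia.
have [e0|[a ae]] := set_0Vmem e.
  move=> F hF _ s; apply/eqP; apply: contraT => /hF.
  by rewrite /independent /= e0 sub0set /= andbF.
have aW := subsetP eW a ae.
have cW : #|W| = (#|W :\ a|).+1 by rewrite (cardsD1 a W) aW.
rewrite /= cW in hN hk; set x := #|W :\ a| in hN hk.
apply: (up_injective_on_del_link (a := a)) => [|k_gt0].
  apply: eq_up_injective_on (fun s => esym (independent_del W E s ae)) _.
  by apply: IH; rewrite -/x; lia.
apply: eq_up_injective_on (fun s => esym (independent_link (e :: E) s aW)) _.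
by case: k k_gt0 hk => // k _ hk; apply: IH; rewrite -/x /= size_map; lia.
Qed.
End BooleanLattice.

Section SquarefreeMonomials.
Variables (K : fieldType) (n : nat).
Local Notation T := {set 'I_n}.
Implicit Types (p f : {mpoly K[n]}) (m g : 'X_{1..n}) (G : seq 'X_{1..n}) (s t : T).

Definition mnm_in_mideal G m := has (fun g => (g <= m)%MM) G.

Definition mnm_of_set s : 'X_{1..n} := [multinom (i \in s : nat) | i < n].
Definition mnm_supp m : T := [set i | m i != 0%N].
Definition mnm_squarefree m := [forall i, m i <= 1]%N.

Lemma mnm_of_setE s i : mnm_of_set s i = (i \in s). Proof. exact: mnmE. Qed.

Lemma mcoeffMX_le p g m :
  (p * 'X_[g])@_m = if (g <= m)%MM then p@_(m - g) else 0.
Proof.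
case: ifP => gm; first by rewrite -{1}(submK gm) addmC mcoeffMX.
rewrite {1}(mpolyE p) mulr_suml raddf_sum big1 // => m' _.
rewrite /= -scalerAl -mpolyXD mcoeffZ mcoeffX.
case: eqP => [mE|]; last by rewrite mulr0.
by move: gm; rewrite -mE lem_addl.
Qed.

Lemma in_midealP G p :
  in_mideal G p <-> (forall m, p@_m != 0 -> mnm_in_mideal G m).
Proof.
split=> [[h ->] m|hp].
  apply: contraR => mI; rewrite raddf_sum big1 //= => i _; rewrite mcoeffMX_le ifF //.
  apply: contraNF mI => gm; apply/hasP.
  by exists (nth mnm0 G i) => //; apply: mem_nth.
pose idx m := find (fun g => (g <= m)%MM) G.
exists (fun i : 'I_(size G) => \sum_(m <- msupp p | idx m == i) p@_m *: 'X_[m - nth mnm0 G i]).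
have -> : \sum_(i < size G)
   (\sum_(m <- msupp p | idx m == i) p@_m *: 'X_[m - nth mnm0 G i]) * 'X_[nth mnm0 G i]
   = \sum_(i < size G) \sum_(m <- msupp p | idx m == i) p@_m *: 'X_[m].
  apply: eq_bigr => i _; rewrite mulr_suml big_seq_cond [RHS]big_seq_cond.
  apply: eq_bigr => m /andP[mp /eqP <-].
  rewrite -scalerAl -mpolyXD submK //.
  by apply: (nth_find mnm0 (a := fun g => (g <= m)%MM)); apply: hp; rewrite -mcoeff_msupp.
rewrite (exchange_big_dep xpredT) //= {1}(mpolyE p) big_seq [RHS]big_seq.
apply: eq_bigr => m mp.
have hlt : (idx m < size G)%N by rewrite -has_find; apply: hp; rewrite -mcoeff_msupp.
by rewrite (big_pred1 (Ordinal hlt)) // => i /=; rewrite eq_sym.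
Qed.

Lemma mdeg_mnm_of_set s : mdeg (mnm_of_set s) = #|s|.
Proof.
rewrite mdegE -sum1_card [RHS]big_mkcond /=; apply: eq_bigr => i _.
by rewrite mnm_of_setE; case: (i \in s).
Qed.

Lemma mnm_of_set_inj : injective mnm_of_set.
Proof.
move=> s t st; apply/setP => i; have := congr1 (fun m : 'X_{1..n} => m i) st.
by rewrite /= !mnm_of_setE; case: (i \in s); case: (i \in t).
Qed.

Lemma le_mnm_of_set m s :
  (m <= mnm_of_set s)%MM = mnm_squarefree m && (mnm_supp m \subset s).
Proof.
apply/mnm_lepP/andP => [h | [/forallP sqf /subsetP ms] i].
  split; first by apply/forallP => i; apply: leq_trans (h i) _; rewrite mnm_of_setE leq_b1.
  apply/subsetP => i; rewrite inE => mi; have := h i; rewrite mnm_of_setE.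
  by case: (i \in s); rewrite ?leqn0 ?(negbTE mi).
rewrite mnm_of_setE; have [/ms -> //|] := boolP (i \in mnm_supp m).
by rewrite inE negbK => /eqP ->.
Qed.

Lemma mnm_squarefreeK m : mnm_squarefree m -> mnm_of_set (mnm_supp m) = m.
Proof.
move=> /forallP sqf; apply/mnmP => i; rewrite mnm_of_setE inE.
by have := sqf i; case: (m i) => [|[|]].
Qed.

Lemma mnm_of_setD1 i t : i \in t -> (mnm_of_set t - U_(i))%MM = mnm_of_set (t :\ i).
Proof.
move=> it; apply/mnmP => j; rewrite mnmBE mnm1E !mnm_of_setE in_setD1.
case: eqP => [<-|/eqP]; first by rewrite it eqxx.
by rewrite eq_sym => /negbTE ->; rewrite subn0.
Qed.

Lemma mnm1_le_of_set i t : (U_(i) <= mnm_of_set t)%MM = (i \in t).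
Proof.
apply/mnm_lepP/idP => [h | it j].
  by have := h i; rewrite mnm1E eqxx mnm_of_setE; case: (i \in t).
by rewrite mnm1E mnm_of_setE; case: eqP => [<-|]; rewrite ?it.
Qed.

Lemma mnm_of_setS s t : s \subset t -> (mnm_of_set s <= mnm_of_set t)%MM.
Proof.
move=> /subsetP st; apply/mnm_lepP => i; rewrite !mnm_of_setE.
by case: (boolP (i \in s)) => // /st ->.
Qed.

Lemma independent_mnm_of_set G s :
  independent [set: 'I_n] (map mnm_supp (filter mnm_squarefree G)) s =
  ~~ mnm_in_mideal G (mnm_of_set s).
Proof.
rewrite /independent subsetT all_map all_filter -all_predC.
by apply: eq_all => g /=; rewrite le_mnm_of_set; case: mnm_squarefree.
Qed.

Lemma mcoeff_sumX_mul f t :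
  ((\sum_(i < n) 'X_i) * f)@_(mnm_of_set t) = up_op (fun s => f@_(mnm_of_set s)) t.
Proof.
rewrite mulr_suml raddf_sum [RHS]big_mkcond /=; apply: eq_bigr => i _.
rewrite /= mulrC mcoeffMX_le mnm1_le_of_set.
by case: ifP => // it; rewrite mnm_of_setD1.
Qed.

Lemma mcoeff_sum_mnm_of_set (F : T -> K) t :
  (\sum_s F s *: 'X_[mnm_of_set s] : {mpoly K[n]})@_(mnm_of_set t) = F t.
Proof.
rewrite raddf_sum (bigD1 t) //= mcoeffZ mcoeffX eqxx mulr1 big1 ?addr0 // => s st.
by rewrite /= mcoeffZ mcoeffX (inj_eq mnm_of_set_inj) (negbTE st) mulr0.
Qed.

End SquarefreeMonomials.

Section QuotientBySquares.
Variables (K : fieldType) (n : nat) (G : seq 'X_{1..n}).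
Hypothesis char0 : [pchar K] =i pred0.
Hypothesis sqG : forall i : 'I_n, (U_(i) *+ 2)%MM \in G.
Local Notation ell := (\sum_(i < n) 'X_i : {mpoly K[n]}).

Lemma squarefree_notin_mideal m : ~~ mnm_in_mideal G m -> mnm_squarefree m.
Proof.
move=> mI; apply/forallP => i; rewrite leqNgt; apply: contra mI => mi.
apply/hasP; exists (U_(i) *+ 2)%MM => //; apply/mnm_lepP => j.
by rewrite mulmnE mnm1E; case: eqP => [<-|].
Qed.

Lemma mul_ell_injective k :
  up_injective_on K (fun s => ~~ mnm_in_mideal G (mnm_of_set s)) k ->
  forall f, f \is k.-homog -> in_mideal G (ell * f) -> in_mideal G f.
Proof.
move=> inj f homf /in_midealP ellfI; apply/in_midealP => m fm.
apply/negPn/negP => mI.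
pose F s := if ~~ mnm_in_mideal G (mnm_of_set s) then f@_(mnm_of_set s) else 0.
have F0 : forall s, F s = 0.
  apply: inj => [s|t tI].
    rewrite /F; case: ifP => [_ fs|_]; last by rewrite eqxx.
    by rewrite -mdeg_mnm_of_set (dhomog_mf homf) ?eqxx // mcoeff_msupp.
  have : (ell * f)@_(mnm_of_set t) = 0 by apply/eqP; apply: contraR tI => /ellfI.
  rewrite mcoeff_sumX_mul => <-; apply: eq_bigr => w wt.
  rewrite /F ifT //; apply: contra tI => /hasP [g gG gle].
  apply/hasP; exists g => //; apply: lepm_trans gle _.
  by apply: mnm_of_setS; apply: subD1set.
have := F0 (mnm_supp m); rewrite /F mnm_squarefreeK ?squarefree_notin_mideal //.
by rewrite mI => /eqP; rewrite (negbTE fm).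
Qed.

Lemma mul_ell_surjective k : (n < 2 * k.+1)%N ->
  forall g, g \is k.+1.-homog ->
  exists f, f \is k.-homog /\ in_mideal G (g - ell * f).
Proof.
move=> nk g homg.
pose Gf (s : {set 'I_n}) := if #|s| == k.+1 then g@_(mnm_of_set s) else 0.
have [|F F_level UF] := up_surjective char0 (G := Gf) nk.
  by move=> s; rewrite /Gf; case: ifP => // _; rewrite eqxx.
exists (\sum_s F s *: 'X_[mnm_of_set s]); split.
  apply: rpred_sum => s _; have [->|/F_level/eqP sk] := eqVneq (F s) 0.
    by rewrite scale0r rpred0.
  by apply: rpredZ; rewrite dhomogX /= mdeg_mnm_of_set sk.
apply/in_midealP => m; apply: contraR => mI.
rewrite -(mnm_squarefreeK (squarefree_notin_mideal mI)) mcoeffB mcoeff_sumX_mul.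
rewrite /up_op; under eq_bigr do rewrite mcoeff_sum_mnm_of_set.
rewrite -/(up_op F _) UF /Gf; case: ifP => [_|sk]; first by rewrite subrr.
by rewrite (dhomog_nemf_coeff homg) ?subrr //= mdeg_mnm_of_set sk.
Qed.

End QuotientBySquares.

Lemma artinian_quadratic_squares (K : fieldType) n (G : seq 'X_{1..n}) :
  artinian_mideal K G -> all (fun m => mdeg m == 2%N) G ->
  forall i : 'I_n, (U_(i) *+ 2)%MM \in G.
Proof.
move=> [N hN] degG i.
have homXN : ('X_[U_(i) *+ N] : {mpoly K[n]}) \is N.-homog.
  by rewrite dhomogX /= mdegMn mdeg1 mul1n.
have /in_midealP/(_ (U_(i) *+ N)%MM) := hN _ homXN.
rewrite mcoeffX eqxx oner_neq0 => /(_ isT) /hasP [g gG /mnm_lepP gle].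
have g0 j : i != j -> g j = 0%N.
  by move=> ij; apply/eqP; rewrite -leqn0; have := gle j; rewrite mulmnE mnm1E (negbTE ij).
have gi : g i = 2%N.
  have /eqP := allP degG g gG; rewrite mdegE (bigD1 i) //= big1 ?addn0 // => j ji.
  by apply: g0; rewrite eq_sym.
suff -> : (U_(i) *+ 2)%MM = g by [].
apply/mnmP => j; rewrite mulmnE mnm1E.
by have [<-|/g0 ->] := eqVneq i j; rewrite ?gi.
Qed.

Lemma count_squarefree_le n (G : seq 'X_{1..n}) : uniq G ->
  (forall i : 'I_n, (U_(i) *+ 2)%MM \in G) -> (count (@mnm_squarefree n) G + n <= size G)%N.
Proof.
move=> uG sqG; rewrite -(count_predC (@mnm_squarefree n) G) leq_add2l -size_filter.
have := @uniq_leq_size _ [seq (U_(i) *+ 2)%MM | i <- enum 'I_n]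
  (filter (predC (@mnm_squarefree n)) G).
rewrite size_map size_enum_ord; apply.
  rewrite map_inj_uniq ?enum_uniq // => i j /(congr1 (fun m : 'X_{1..n} => m i)).
  by rewrite /= !mulmnE !mnm1E eqxx; case: eqP.
move=> _ /mapP [i _ ->]; rewrite mem_filter sqG andbT /=.
by apply/forallPn; exists i; rewrite mulmnE mnm1E eqxx.
Qed.

Theorem proposition6p5 (K : fieldType) (n : nat) (G : seq (multinom n)) :
  [pchar K] =i pred0 ->
  odd n -> (5 <= n)%N ->
  size G = (n + 2)%N ->
  uniq G ->
  all (fun m : multinom n => mdeg m == 2%N) G ->
  artinian_mideal K G ->
  has_WLP K G.
Proof.
move=> char0 odd_n _ sizeG uniqG degG art.
have sqG := artinian_quadratic_squares art degG.
set E := map (@mnm_supp n) (filter (@mnm_squarefree n) G).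
have sizeE : (size E <= 2)%N.
  by have := count_squarefree_le uniqG sqG; rewrite size_map size_filter sizeG; lia.
exists (fun _ => 1) => /= k; under eq_bigr do rewrite scale1r.
have [small|large] := ltnP (2 * k + 2) n.
  left; apply: (mul_ell_injective sqG).
  apply: (eq_up_injective_on (P := independent setT E)).
    by move=> s; rewrite independent_mnm_of_set.
  by apply: (up_injective_on_independent char0); rewrite cardsT card_ord; lia.
right; apply: (mul_ell_surjective char0 sqG).
have : n != (2 * k.+1)%N by apply: contraTneq odd_n => ->; rewrite oddM.
lia.
Qed.
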